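(* Let $n=m$ and $\rho=|\Psi\rangle\langle\Psi|$ with $|\Psi\rangle=\frac{1}{\sqrt m}\sum_{i=1}^m|i\rangle|i\rangle$ a maximally entangled state of $\mathbb{C}^m\otimes\mathbb{C}^m$. Then $D_P(\rho)=D_G(\rho)=\frac{m-1}{m}$.
   Context: Generators $\hat\lambda_i$ ($i=1,\dots,m^2-1$) of $SU(m)$ are Hermitian, traceless, with $\mathrm{Tr}(\hat\lambda_i\hat\lambda_j)=2\delta_{ij}$. For a state $\rho$ on $\mathbb{C}^m\otimes\mathbb{C}^n$, $x_i=\frac{m}{2}\mathrm{Tr}[(\hat\lambda_i^A\otimes\mathbb{I})\rho]$, $t_{ij}=\frac{mn}{4}\mathrm{Tr}[(\hat\lambda_i^A\otimes\hat\lambda_j^B)\rho]$, $T=(t_{ij})$, $\mathcal{T}=\sqrt{\frac{2}{m^2n}}\begin{pmatrix}\vec{x} & \sqrt{\frac{2}{n}}T\end{pmatrix}$; $D_P(\rho)=\min_P\|\mathcal{T}-P\mathcal{T}\|^2$ over rank-$(m-1)$ orthogonal projections $P$ on $\mathbb{R}^{m^2-1}$ (Frobenius norm). The geometric discord is $D_G(\rho)=\min_\chi\mathrm{Tr}(\rho-\chi)^2$ over zero-discord states $\chi=\sum_{k=1}^m p_k|k\rangle\langle k|\otimes\rho_k^B$ ($\{|k\rangle\}$ an orthonormal basis of the first factor, $p_k$ probabilities, $\rho_k^B$ states). *)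

From HB Require Import structures.
From mathcomp Require Import all_boot all_order all_algebra.
From mathcomp Require Import reals.
From mathcomp.real_closed Require Import complex mxtens.

Set Implicit Arguments.
Unset Strict Implicit.
Unset Printing Implicit Defensive.

Import Order.TTheory GRing.Theory Num.Theory.
Local Open Scope ring_scope.
Local Open Scope complex_scope.

Definition adjmx (R : rcfType) (p q : nat) (A : 'M[R[i]]_(p, q)) : 'M[R[i]]_(q, p) :=
  map_mx (fun z => z^*) A^T.

Definition hermitian (R : rcfType) (p : nat) (A : 'M[R[i]]_p) : Prop :=
  adjmx A = A.

(* positive semidefinite: <v, A v> >= 0 (in particular real) for all v *)
Definition psd (R : rcfType) (p : nat) (A : 'M[R[i]]_p) : Prop :=
  forall v : 'cV[R[i]]_p, 0 <= (adjmx v *m A *m v) 0 0.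

Definition is_state (R : rcfType) (p : nat) (A : 'M[R[i]]_p) : Prop :=
  psd A /\ \tr A = 1.

Definition unitary (R : rcfType) (p : nat) (U : 'M[R[i]]_p) : Prop :=
  adjmx U *m U = 1%:M.

Definition su_generators (R : rcfType) (p : nat)
    (lam : 'I_(p ^ 2 - 1) -> 'M[R[i]]_p) : Prop :=
  (forall k, hermitian (lam k)) /\ (forall k, \tr (lam k) = 0) /\
  (forall k l, \tr (lam k *m lam l) = (2 * (k == l)%:R)%:C).

Definition bloch_x (R : rcfType) (m n : nat)
    (lamA : 'I_(m ^ 2 - 1) -> 'M[R[i]]_m) (rho : 'M[R[i]]_(m * n))
    : 'cV[R]_(m ^ 2 - 1) :=
  \col_k complex.Re ((m%:R / 2)%:C * \tr ((lamA k *t (1%:M : 'M[R[i]]_n)) *m rho)).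

Definition bloch_T (R : rcfType) (m n : nat)
    (lamA : 'I_(m ^ 2 - 1) -> 'M[R[i]]_m) (lamB : 'I_(n ^ 2 - 1) -> 'M[R[i]]_n)
    (rho : 'M[R[i]]_(m * n)) : 'M[R]_(m ^ 2 - 1, n ^ 2 - 1) :=
  \matrix_(k, l) complex.Re (((m * n)%:R / 4)%:C * \tr ((lamA k *t lamB l) *m rho)).

Definition bloch_calT (R : rcfType) (m n : nat)
    (lamA : 'I_(m ^ 2 - 1) -> 'M[R[i]]_m) (lamB : 'I_(n ^ 2 - 1) -> 'M[R[i]]_n)
    (rho : 'M[R[i]]_(m * n)) : 'M[R]_(m ^ 2 - 1, 1 + (n ^ 2 - 1)) :=
  Num.sqrt (2 / (m ^ 2 * n)%:R) *:
    row_mx (bloch_x lamA rho) (Num.sqrt (2 / n%:R) *: bloch_T lamA lamB rho).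

Definition frob2 (R : rcfType) (p q : nat) (A : 'M[R]_(p, q)) : R :=
  \sum_i \sum_j A i j ^+ 2.

Definition orth_proj (R : rcfType) (p r : nat) (P : 'M[R]_p) : Prop :=
  P^T = P /\ P *m P = P /\ \rank P = r.

Definition DP_is (R : rcfType) (m n : nat)
    (lamA : 'I_(m ^ 2 - 1) -> 'M[R[i]]_m) (lamB : 'I_(n ^ 2 - 1) -> 'M[R[i]]_n)
    (rho : 'M[R[i]]_(m * n)) (d : R) : Prop :=
  let calT := bloch_calT lamA lamB rho in
  (exists P, orth_proj (m - 1) P /\ frob2 (calT - P *m calT) = d) /\
  (forall P, orth_proj (m - 1) P -> d <= frob2 (calT - P *m calT)).

Definition zero_discord (R : rcfType) (m n : nat) (chi : 'M[R[i]]_(m * n)) : Prop :=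
  exists (U : 'M[R[i]]_m) (pr : 'I_m -> R) (rhoB : 'I_m -> 'M[R[i]]_n),
    [/\ unitary U, (forall k, 0 <= pr k), \sum_k pr k = 1,
        (forall k, is_state (rhoB k)) &
        chi = \sum_k ((pr k)%:C *: ((col k U *m adjmx (col k U)) *t rhoB k))].

Definition DG_is (R : rcfType) (m n : nat) (rho : 'M[R[i]]_(m * n)) (d : R) : Prop :=
  (exists chi : 'M[R[i]]_(m * n), zero_discord chi /\ \tr ((rho - chi) *m (rho - chi)) = d%:C) /\
  (forall chi : 'M[R[i]]_(m * n), zero_discord chi -> d%:C <= \tr ((rho - chi) *m (rho - chi))).

Definition max_ent_vec (R : rcfType) (m : nat) : 'cV[R[i]]_(m * m) :=
  ((Num.sqrt (m%:R : R))^-1)%:C *: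
    \sum_(k < m) ((delta_mx k 0 : 'cV[R[i]]_m) *t (delta_mx k 0 : 'cV[R[i]]_m)).

Definition max_ent_state (R : rcfType) (m : nat) : 'M[R[i]]_(m * m) :=
  max_ent_vec R m *m adjmx (max_ent_vec R m).

From Pilot Require Import Defs.
From HB Require Import structures.
From mathcomp Require Import all_boot all_order all_algebra.
From mathcomp Require Import reals.
From mathcomp.real_closed Require Import complex mxtens.
From mathcomp Require Import ring lra.
Import Order.TTheory GRing.Theory Num.Theory.
Local Open Scope ring_scope.

(* For the maximally entangled state rho, Tr((A (x) B) rho) = Tr(A B^T) / m.
   Hence x = 0 and T = (m/4) O with O_ij = Tr(lamA_i lamB_j^T); the
   completeness relation of the SU(m) generators gives O O^T = 4, so that
   calT calT^T = m^-2 and every rank-(m-1) orthogonal projection P leaves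
   ||calT - P calT||^2 = m^-2 ((m^2 - 1) - (m - 1)) = (m - 1)/m.
   For chi = sum_k p_k P_k (x) sigma_k with P_k = |k><k|, the same identity
   gives Tr(rho - chi)^2 = (m - 1)/m + sum_k Tr(M_k^2) with the hermitian
   M_k = p_k sigma_k - P_k^T / m, which vanishes for p_k = 1/m and
   sigma_k = P_k^T. *)

Set Implicit Arguments.
Unset Strict Implicit.
Unset Printing Implicit Defensive.

Section ConjugateTranspose.
Variable R : rcfType.
Local Notation C := R[i].
Local Open Scope complex_scope.

Lemma adjmxE p q (A : 'M[C]_(p, q)) i j : adjmx A i j = conjc (A j i).
Proof. by rewrite /adjmx !mxE. Qed.

Lemma adjmxD p q (A B : 'M[C]_(p, q)) : adjmx (A + B) = adjmx A + adjmx B.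
Proof. by apply/matrixP=> i j; rewrite !(adjmxE, mxE) rmorphD. Qed.

Lemma adjmxB p q (A B : 'M[C]_(p, q)) : adjmx (A - B) = adjmx A - adjmx B.
Proof. by apply/matrixP=> i j; rewrite !(adjmxE, mxE) rmorphB. Qed.

Lemma adjmxZ p q c (A : 'M[C]_(p, q)) : adjmx (c *: A) = conjc c *: adjmx A.
Proof. by apply/matrixP=> i j; rewrite !(adjmxE, mxE) rmorphM. Qed.

Lemma adjmxM p q r (A : 'M[C]_(p, q)) (B : 'M[C]_(q, r)) :
  adjmx (A *m B) = adjmx B *m adjmx A.
Proof.
apply/matrixP=> i j; rewrite !(adjmxE, mxE) rmorph_sum; apply: eq_bigr => k _.
by rewrite !adjmxE rmorphM mulrC.
Qed.

Lemma adjmxK p q (A : 'M[C]_(p, q)) : adjmx (adjmx A) = A.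
Proof. by apply/matrixP=> i j; rewrite !adjmxE conjcK. Qed.

Lemma adjmx_trmx p q (A : 'M[C]_(p, q)) : adjmx A^T = (adjmx A)^T.
Proof. by apply/matrixP=> i j; rewrite !(adjmxE, mxE). Qed.

Lemma adjmx_sum p q (I : finType) (F : I -> 'M[C]_(p, q)) :
  adjmx (\sum_i F i) = \sum_i adjmx (F i).
Proof.
apply/matrixP=> i j; rewrite adjmxE !summxE rmorph_sum.
by apply: eq_bigr => k _; rewrite adjmxE.
Qed.

Lemma adjmx_delta p q (i : 'I_p) (j : 'I_q) :
  adjmx (delta_mx i j : 'M[C]_(p, q)) = delta_mx j i.
Proof. by apply/matrixP=> a b; rewrite !(adjmxE, mxE) conjc_nat andbC. Qed.

Lemma adjmx1 p : adjmx (1%:M : 'M[C]_p) = 1%:M.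
Proof. by apply/matrixP=> a b; rewrite !(adjmxE, mxE) conjc_nat eq_sym. Qed.

Lemma mxtrace_mul_adjmx_ge0 p q (A : 'M[C]_(p, q)) : 0 <= \tr (A *m adjmx A).
Proof.
apply: sumr_ge0 => i _; rewrite mxE; apply: sumr_ge0 => j _.
by rewrite adjmxE mulcJ_ge0.
Qed.

Lemma mxtrace_sqr_hermitian_ge0 p (M : 'M[C]_p) :
  Defs.hermitian M -> 0 <= \tr (M *m M).
Proof. by move=> hM; rewrite -{2}hM mxtrace_mul_adjmx_ge0. Qed.

Lemma hermitian_trmx p (X : 'M[C]_p) : Defs.hermitian X -> Defs.hermitian X^T.
Proof. by rewrite /Defs.hermitian adjmx_trmx => ->. Qed.

Lemma conjc_mxtrace p (M : 'M[C]_p) : conjc (\tr M) = \tr (map_mx conjc M).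
Proof. by rewrite /mxtrace rmorph_sum; apply: eq_bigr => i _; rewrite mxE. Qed.

Lemma conjc_mxtrace_mul_hermitian p (X Y : 'M[C]_p) :
  Defs.hermitian X -> Defs.hermitian Y -> conjc (\tr (X *m Y)) = \tr (X *m Y).
Proof.
have conj_herm (Z : 'M[C]_p) : Defs.hermitian Z -> map_mx conjc Z = Z^T.
  by move=> hZ; rewrite -{2}hZ /adjmx -map_trmx trmxK.
move=> hX hY; rewrite conjc_mxtrace map_mxM !conj_herm //.
by rewrite -trmx_mul mxtrace_tr mxtrace_mulC.
Qed.

Lemma conjc_fixed_Re (z : C) : conjc z = z -> z = (complex.Re z)%:C.
Proof.
move=> hz; rewrite ReJ_add hz; have two0 : (2%:R : C) != 0 by rewrite pnatr_eq0.
by field.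
Qed.

End ConjugateTranspose.

Section PositiveSemidefinite.
Variable R : rcfType.
Local Notation C := R[i].
Local Open Scope complex_scope.

Lemma delta_mx_form p q (X : 'M[C]_(p, q)) a b :
  ((delta_mx 0 a : 'rV[C]_p) *m X *m (delta_mx b 0 : 'cV[C]_q)) 0 0 = X a b.
Proof. by rewrite -rowE -colE !mxE. Qed.

Lemma form_delta_add p (A : 'M[C]_p) a b c :
  let v := (delta_mx a 0 : 'cV[C]_p) + c *: delta_mx b 0 in
  (adjmx v *m A *m v) 0 0 =
  A a a + c * A a b + conjc c * A b a + conjc c * c * A b b.
Proof.
rewrite /= adjmxD adjmxZ !adjmx_delta !(mulmxDl, mulmxDr) -!scalemxAl -!scalemxAr.
rewrite ![((_ + _ : 'M[C]_1) _ _)]mxE ![((_ *: _ : 'M[C]_1) _ _)]mxE.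
by rewrite !delta_mx_form; ring.
Qed.

(* The form on e_a + c e_b is real for c = 1, -1, 'i; these three linear
   conditions on the entries force A b a = (A a b)^*. *)
Lemma psd_hermitian p (A : 'M[C]_p) : psd A -> Defs.hermitian A.
Proof.
move=> hA; apply/matrixP => b a; rewrite adjmxE.
have im0 c := ger0_Im (hA (delta_mx a 0 + c *: delta_mx b 0)).
have := im0 1; have := im0 (-1); have := im0 'i.
rewrite !form_delta_add.
case: (A a a) (A a b) (A b a) (A b b) => [? ?] [? ?] [? ?] [? ?] /=.
simpc => /= *; congr Complex; lra.
Qed.

End PositiveSemidefinite.

Lemma mxtrace_tens (R : comPzRingType) p q (A : 'M[R]_p) (B : 'M[R]_q) :
  \tr (A *t B) = \tr A * \tr B.
Proof. by rewrite /mxtrace mulr_sum; apply: eq_bigr => i _; rewrite mxE. Qed.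

Lemma mxtens_index_inj p q : injective (@mxtens_index p q).
Proof. exact: can_inj (@mxtens_indexK p q). Qed.

Lemma tens_delta_col (R : comPzRingType) p q (k : 'I_p) (l : 'I_q) :
  (delta_mx k 0 : 'cV[R]_p) *t (delta_mx l 0 : 'cV[R]_q) =
  delta_mx (mxtens_index (k, l)) 0.
Proof.
apply/matrixP=> i j; case: (mxtens_indexP i) => a b.
rewrite !mxE mxtens_indexK /= !ord1 !eqxx !andbT (inj_eq (@mxtens_index_inj _ _)).
by rewrite xpair_eqE -natrM mulnb.
Qed.

Section MaxEntangled.
Variable R : rcfType.
Local Notation C := R[i].
Local Open Scope complex_scope.

Lemma mxtrace_mul_rank1 p (X : 'M[C]_p) (v : 'cV[C]_p) :
  \tr (X *m (v *m adjmx v)) = (adjmx v *m X *m v) 0 0.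
Proof. by rewrite mulmxA mxtrace_mulC mulmxA /mxtrace big_ord1. Qed.

Variable m : nat.

Let s : C := ((Num.sqrt (m%:R : R))^-1)%:C.

Lemma max_ent_vecE :
  max_ent_vec R m = s *: \sum_(k < m) delta_mx (mxtens_index (k, k)) 0.
Proof.
rewrite /max_ent_vec; congr (_ *: _).
by apply: eq_bigr => k _; rewrite tens_delta_col.
Qed.

Lemma conjc_max_ent_coef : conjc s * s = (m%:R)^-1.
Proof.
rewrite /s conjc_real -rmorphM /= -invfM -expr2 sqr_sqrtr ?ler0n //.
by rewrite fmorphV /= rmorph_nat.
Qed.

Lemma form_max_ent_vec (X : 'M[C]_(m * m)) :
  (adjmx (max_ent_vec R m) *m X *m max_ent_vec R m) 0 0 =
  (m%:R)^-1 * \sum_a \sum_b X (mxtens_index (a, a)) (mxtens_index (b, b)).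
Proof.
rewrite max_ent_vecE adjmxZ adjmx_sum -!scalemxAl -scalemxAr scalerA mxE.
rewrite conjc_max_ent_coef mulmx_suml mulmx_suml summxE; congr (_ * _).
apply: eq_bigr => a _; rewrite mulmx_sumr summxE; apply: eq_bigr => b _.
by rewrite adjmx_delta delta_mx_form.
Qed.

Lemma mxtrace_mul_max_ent (X : 'M[C]_(m * m)) :
  \tr (X *m max_ent_state R m) =
  (m%:R)^-1 * \sum_a \sum_b X (mxtens_index (a, a)) (mxtens_index (b, b)).
Proof. by rewrite /max_ent_state mxtrace_mul_rank1 form_max_ent_vec. Qed.

Lemma mxtrace_tens_mul_max_ent (A B : 'M[C]_m) :
  \tr ((A *t B) *m max_ent_state R m) = (m%:R)^-1 * \tr (A *m B^T).
Proof.
rewrite mxtrace_mul_max_ent; congr (_ * _); apply: eq_bigr => a _; rewrite mxE.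
by apply: eq_bigr => b _; rewrite tensmxE !mxE.
Qed.

Lemma max_ent_vec_diag x : max_ent_vec R m (mxtens_index (x, x)) 0 = s.
Proof.
rewrite max_ent_vecE mxE summxE (bigD1 x) //= mxE !eqxx big1 ?addr0 ?mulr1 //.
move=> k kx; rewrite mxE (inj_eq (@mxtens_index_inj _ _)) xpair_eqE andbb.
by rewrite eq_sym (negbTE kx).
Qed.

Lemma max_ent_state_diag a b :
  max_ent_state R m (mxtens_index (a, a)) (mxtens_index (b, b)) = (m%:R)^-1.
Proof.
rewrite /max_ent_state mxE big_ord1 adjmxE !max_ent_vec_diag.
by rewrite mulrC conjc_max_ent_coef.
Qed.

Lemma mxtrace_max_ent_sqr : (0 < m)%N ->
  \tr (max_ent_state R m *m max_ent_state R m) = 1.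
Proof.
move=> m_gt0; rewrite mxtrace_mul_max_ent.
under eq_bigr => a _ do under eq_bigr => b _ do rewrite max_ent_state_diag.
rewrite !sumr_const !card_ord -[_ *+ m]mulr_natr -[_ *+ m]mulr_natr.
have m_neq0 : (m%:R : C) != 0 by rewrite pnatr_eq0 -lt0n.
by field.
Qed.

End MaxEntangled.

Section TraceExpansion.
Variable F : fieldType.

Lemma sum_mxvec_index (V : nmodType) p q (G : 'I_(p * q) -> V) :
  \sum_i G i = \sum_(a < p) \sum_(b < q) G (mxvec_index a b).
Proof.
rewrite pair_big /= (reindex (uncurry (@mxvec_index p q))) /=.
  by apply: eq_bigr => -[a b] _.
case: (curry_mxvec_bij p q) => g h1 h2.
by exists g => x _; [apply: h1 | apply: h2].
Qed.

Lemma mxtrace_mul_mxvec p (A B : 'M[F]_p) :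
  \sum_j mxvec A 0 j * mxvec B^T 0 j = \tr (A *m B).
Proof.
rewrite sum_mxvec_index /mxtrace; apply: eq_bigr => a _; rewrite mxE.
by apply: eq_bigr => b _; rewrite !mxvecE mxE.
Qed.

(* A trace-orthogonal family of p^2 matrices is linearly independent, hence
   a basis, and trace duality gives the coordinates. *)
Lemma mxtrace_orthogonal_expansion p n (f : 'I_n -> 'M[F]_p) (g : 'I_n -> F) :
  n = (p * p)%N -> (forall i, g i != 0) ->
  (forall i l, \tr (f i *m f l) = (i == l)%:R * g l) ->
  forall A : 'M[F]_p, A = \sum_i (\tr (A *m f i) / g i) *: f i.
Proof.
move=> np g_neq0 gram A.
pose L := \matrix_(i < n, j < p * p) mxvec (f i) 0 j.
pose K := \matrix_(j < p * p, l < n) (mxvec (f l)^T 0 j / g l).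
have LK : L *m K = 1%:M.
  apply/matrixP => i l; rewrite !mxE.
  under eq_bigr => j _ do rewrite !mxE mulrA.
  by rewrite -mulr_suml mxtrace_mul_mxvec gram -mulrA mulfV // mulr1.
have L_full : row_full L.
  have /eqP L_free : row_free L by apply/row_freeP; exists K.
  by rewrite /row_full L_free np.
have [D hD] : exists D : 'rV[F]_n, mxvec A = D *m L.
  by apply/submxP; apply: submx_full.
have AE : A = \sum_i D 0 i *: f i.
  apply/matrixP => a b.
  have := congr1 (fun v : 'rV_(p * p) => v 0 (mxvec_index a b)) hD.
  rewrite /= mxvecE => ->; rewrite !mxE summxE; apply: eq_bigr => i _.
  by rewrite !mxE mxvecE.
have DE i : D 0 i = \tr (A *m f i) / g i.
  rewrite {1}AE mulmx_suml raddf_sum /= (bigD1 i) //= big1 ?addr0.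
    by rewrite -scalemxAl mxtraceZ gram eqxx mul1r mulfK.
  by move=> j /negbTE ji; rewrite -scalemxAl mxtraceZ gram ji mul0r mulr0.
by rewrite {1}AE; apply: eq_bigr => i _; rewrite DE.
Qed.

End TraceExpansion.

Lemma su_generators_completeness (F : numFieldType) p
    (mu : 'I_(p ^ 2 - 1) -> 'M[F]_p) :
  (0 < p)%N -> (forall k, \tr (mu k) = 0) ->
  (forall k l, \tr (mu k *m mu l) = 2 * (k == l)%:R) ->
  forall A B : 'M[F]_p, \tr A = 0 ->
  \tr (A *m B) = \sum_k \tr (A *m mu k) / 2 * \tr (mu k *m B).
Proof.
move=> p_gt0 mu0 gram A B A0.
set N := (p ^ 2 - 1)%N.
pose f (i : 'I_(N + 1)) : 'M[F]_p :=
  match split i with inl k => mu k | inr _ => 1%:M end.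
pose g (i : 'I_(N + 1)) : F := match split i with inl _ => 2 | inr _ => p%:R end.
have NE : (N + 1 = p * p)%N by rewrite /N subnK ?expn_gt0 ?p_gt0 // mulnn.
have g_neq0 i : g i != 0.
  by rewrite /g; case: split => _; rewrite pnatr_eq0 // -lt0n.
have fgram i l : \tr (f i *m f l) = (i == l)%:R * g l.
  rewrite -(splitK i) -(splitK l) /f /g !unsplitK (inj_eq (can_inj unsplitK)).
  case: (split i) => a; case: (split l) => b /=.
  - by rewrite gram mulrC -[inl a == inl b]/(a == b).
  - by rewrite mulmx1 mu0 mul0r.
  - by rewrite mul1mx mu0 mul0r.
  - by rewrite mulmx1 mxtrace1 [a]ord1 [b]ord1 eqxx mul1r.
rewrite {1}(mxtrace_orthogonal_expansion NE g_neq0 fgram A) mulmx_suml raddf_sum /=.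
rewrite big_split_ord /= big_ord1 -scalemxAl mxtraceZ.
have split_r k : split (rshift N k) = inr k := unsplitK (inr k).
have split_l k : split (lshift 1 k) = inl k := unsplitK (inl k).
rewrite /f /g split_r mulmx1 A0 mul0r mul0r addr0.
by apply: eq_bigr => k _; rewrite -scalemxAl mxtraceZ split_l.
Qed.

Lemma mxtrace_idem (F : fieldType) n (P : 'M[F]_n) :
  P *m P = P -> \tr P = (\rank P)%:R.
Proof.
move=> PP; set Cb := col_base P; set Rb := row_base P.
have CR : Cb *m Rb = P by apply: mulmx_base.
have RC : Rb *m Cb = 1%:M.
  apply: (row_full_inj (col_base_full P)); apply: (row_free_inj (row_base_free P)).
  have -> : Cb *m (Rb *m Cb) *m Rb = (Cb *m Rb) *m (Cb *m Rb) by rewrite !mulmxA.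
  by rewrite mulmx1 CR PP.
by rewrite -{1}CR mxtrace_mulC RC mxtrace1.
Qed.

Section OrthogonalProjection.
Variable R : rcfType.

Lemma frob2E p q (Y : 'M[R]_(p, q)) : frob2 Y = \tr (Y *m Y^T).
Proof.
rewrite /frob2 /mxtrace; apply: eq_bigr => i _; rewrite mxE.
by apply: eq_bigr => j _; rewrite mxE expr2.
Qed.

Lemma frob2_sub_orth_proj N q r (Y : 'M[R]_(N, q)) (c : R) (P : 'M[R]_N) :
  Y *m Y^T = c%:M -> orth_proj r P -> frob2 (Y - P *m Y) = c * (N%:R - r%:R).
Proof.
move=> YY [PT [PP rk]].
have idem_compl : (1%:M - P) *m (1%:M - P)^T = 1%:M - P.
  by rewrite linearB /= trmx1 PT mulmxBr mulmx1 !mulmxBl PP mul1mx subrr subr0.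
rewrite -{1}(mul1mx Y) -mulmxBl frob2E trmx_mul mulmxA -(mulmxA _ Y) YY.
rewrite mul_mx_scalar -scalemxAl idem_compl mxtraceZ raddfB /= mxtrace1.
by rewrite mxtrace_idem // rk.
Qed.

Lemma orth_proj_pid_mx N r : (r <= N)%N -> orth_proj r (pid_mx r : 'M[R]_N).
Proof. by move=> rN; rewrite /orth_proj tr_pid_mx pid_mx_id // rank_pid_mx. Qed.

End OrthogonalProjection.

Section MaxEntangledBloch.
Variable R : rcfType.
Local Notation C := R[i].
Local Open Scope complex_scope.

Lemma su_generators_gram p (lam : 'I_(p ^ 2 - 1) -> 'M[C]_p) :
  su_generators lam -> forall k l, \tr (lam k *m lam l) = 2 * (k == l)%:R.
Proof. by case=> _ [_ gram] k l; rewrite gram rmorphM /= !rmorph_nat. Qed.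

Variable m : nat.
Hypothesis m_gt0 : (0 < m)%N.
Variables lamA lamB : 'I_(m ^ 2 - 1) -> 'M[C]_m.
Hypothesis hA : su_generators lamA.
Hypothesis hB : su_generators lamB.

Let overlap i j := \tr (lamA i *m (lamB j)^T).

Lemma overlap_real i j : overlap i j = (complex.Re (overlap i j))%:C.
Proof.
apply: conjc_fixed_Re; apply: conjc_mxtrace_mul_hermitian; first by case: hA.
by apply: hermitian_trmx; case: hB.
Qed.

(* The transposed generators lamB^T are again SU(m) generators; expand
   lamA_i lamA_k in them. *)
Lemma overlap_orthogonal i k : \sum_j overlap i j * overlap k j = 4 * (i == k)%:R.
Proof.
case: hA => _ [lamA0 _]; case: hB => _ [lamB0 _].
have lamBT0 j : \tr (lamB j)^T = 0 by rewrite mxtrace_tr.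
have gramT j l : \tr ((lamB j)^T *m (lamB l)^T) = 2 * (j == l)%:R.
  by rewrite -trmx_mul mxtrace_tr su_generators_gram // eq_sym.
have expand := su_generators_completeness m_gt0 lamBT0 gramT (lamA k) (lamA0 i).
have -> : \sum_j overlap i j * overlap k j =
    2 * \sum_j overlap i j / 2 * \tr ((lamB j)^T *m lamA k).
  rewrite mulr_sumr; apply: eq_bigr => j _.
  rewrite /overlap [\tr (_ *m lamA k)]mxtrace_mulC.
  have two_neq0 : 2 != 0 :> C by rewrite pnatr_eq0.
  by field.
by rewrite -expand su_generators_gram // mulrA -natrM.
Qed.

Let overlap_mx := \matrix_(i, j) complex.Re (overlap i j).

Lemma overlap_mx_mul_tr : overlap_mx *m overlap_mx^T = 4%:M.
Proof.
apply/matrixP => i k; rewrite !mxE; apply: complexI; rewrite rmorph_sum /=.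
under eq_bigr => j _ do rewrite !mxE rmorphM /= -!overlap_real.
by rewrite overlap_orthogonal rmorphMn mulr_natr -(rmorph_nat (real_complex R)).
Qed.

Lemma bloch_x_max_ent : bloch_x lamA (max_ent_state R m) = 0.
Proof.
case: hA => _ [lamA0 _]; apply/matrixP => k l.
by rewrite !mxE mxtrace_tens_mul_max_ent trmx1 mulmx1 lamA0 !mulr0.
Qed.

Lemma bloch_T_max_ent :
  bloch_T lamA lamB (max_ent_state R m) = (m%:R / 4) *: overlap_mx.
Proof.
apply/matrixP => i j; rewrite !mxE mxtrace_tens_mul_max_ent -/(overlap i j).
rewrite overlap_real -(rmorph_nat (real_complex R)) -fmorphV -!rmorphM /= natrM.
have m_neq0 : (m%:R : R) != 0 by rewrite pnatr_eq0 -lt0n.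
by field.
Qed.

Lemma bloch_calT_max_ent_mul_tr :
  let calT := bloch_calT lamA lamB (max_ent_state R m) in
  calT *m calT^T = ((m%:R ^+ 2)^-1 : R)%:M.
Proof.
rewrite /bloch_calT bloch_x_max_ent bloch_T_max_ent.
set s1 := Num.sqrt _; set s2 := Num.sqrt _.
have m_neq0 : (m%:R : R) != 0 by rewrite pnatr_eq0 -lt0n.
have s1s1 : s1 * s1 = 2 / (m ^ 2 * m)%:R.
  by rewrite -expr2 sqr_sqrtr // divr_ge0 ?ler0n.
have s2s2 : s2 * s2 = 2 / m%:R by rewrite -expr2 sqr_sqrtr // divr_ge0 ?ler0n.
rewrite !linearZ /= tr_row_mx !linearZ /= trmx0 -scalemxAl mul_row_col mul0mx add0r.
rewrite -!scalemxAl -!scalemxAr overlap_mx_mul_tr !scalerA scale_scalar_mx.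
congr (_%:M).
transitivity ((s1 * s1) * (s2 * s2) * (m%:R / 4) ^+ 2 * 4); first by ring.
by rewrite s1s1 s2s2 natrM natrX; field.
Qed.

Lemma DP_max_ent : DP_is lamA lamB (max_ent_state R m) ((m%:R - 1) / m%:R).
Proof.
have value P : orth_proj (m - 1) P ->
    frob2 (bloch_calT lamA lamB (max_ent_state R m) -
           P *m bloch_calT lamA lamB (max_ent_state R m)) = (m%:R - 1) / m%:R.
  move=> hP; rewrite (frob2_sub_orth_proj bloch_calT_max_ent_mul_tr hP).
  have m_neq0 : (m%:R : R) != 0 by rewrite pnatr_eq0 -lt0n.
  rewrite natrB ?expn_gt0 ?m_gt0 // natrB // natrX.
  by field.
split; last by move=> P /value ->.
have le_m_m2 : (m - 1 <= m ^ 2 - 1)%N by rewrite leq_sub2r // -mulnn leq_pmulr.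
have pid_proj := orth_proj_pid_mx R le_m_m2.
by exists (pid_mx (m - 1)); split; [exact: pid_proj | exact: value].
Qed.

End MaxEntangledBloch.

Section ClassicalQuantum.
Variable R : rcfType.
Local Notation C := R[i].
Local Open Scope complex_scope.

Definition col_proj p (U : 'M[C]_p) k := col k U *m adjmx (col k U).

Definition cq_state p q (U : 'M[C]_p) (pr : 'I_p -> R) (sig : 'I_p -> 'M[C]_q) :
  'M[C]_(p * q) := \sum_k (pr k)%:C *: (col_proj U k *t sig k).

Lemma adjmx_col_proj p (U : 'M[C]_p) k : adjmx (col_proj U k) = col_proj U k.
Proof. by rewrite /col_proj adjmxM adjmxK. Qed.

Lemma col_proj1 p (k : 'I_p) : col_proj 1%:M k = delta_mx k k.
Proof. by rewrite /col_proj col1 adjmx_delta mul_delta_mx. Qed.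

Lemma adjmx_col_mul_col p (U : 'M[C]_p) a b :
  (adjmx (col a U) *m col b U) 0 0 = (adjmx U *m U) a b.
Proof. by rewrite !mxE; apply: eq_bigr => j _; rewrite !adjmxE !mxE. Qed.

Lemma mxtrace_col_proj_mul p (U : 'M[C]_p) k l : unitary U ->
  \tr (col_proj U k *m col_proj U l) = (k == l)%:R.
Proof.
move=> hU; rewrite /col_proj -!mulmxA mxtrace_mulC !mulmxA /mxtrace big_ord1.
have -> : adjmx (col k U) *m col l U *m adjmx (col l U) *m col k U =
    (adjmx (col k U) *m col l U) *m (adjmx (col l U) *m col k U) by rewrite !mulmxA.
rewrite [LHS]mxE big_ord1 !adjmx_col_mul_col hU !mxE eq_sym.
by case: (l == k); rewrite ?mulr1 ?mulr0.
Qed.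

Lemma mxtrace_cq_state_sqr p q (U : 'M[C]_p) pr (sig : 'I_p -> 'M[C]_q) :
  unitary U ->
  \tr (cq_state U pr sig *m cq_state U pr sig) =
  \sum_k (pr k)%:C ^+ 2 * \tr (sig k *m sig k).
Proof.
move=> hU; rewrite /cq_state mulmx_suml raddf_sum /=; apply: eq_bigr => k _.
rewrite mulmx_sumr raddf_sum /= (bigD1 k) //= big1 ?addr0 => [|l lk].
  rewrite -scalemxAl -scalemxAr scalerA mxtraceZ tensmx_mul mxtrace_tens.
  by rewrite mxtrace_col_proj_mul // eqxx mul1r expr2.
rewrite -scalemxAl -scalemxAr scalerA mxtraceZ tensmx_mul mxtrace_tens.
by rewrite mxtrace_col_proj_mul // eq_sym (negbTE lk) mul0r mulr0.
Qed.

Lemma mxtrace_cq_state_mul_max_ent m (U : 'M[C]_m) pr (sig : 'I_m -> 'M[C]_m) :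
  \tr (cq_state U pr sig *m max_ent_state R m) =
  (m%:R)^-1 * \sum_k (pr k)%:C * \tr (col_proj U k *m (sig k)^T).
Proof.
rewrite mulmx_suml raddf_sum /= mulr_sumr; apply: eq_bigr => k _.
by rewrite -scalemxAl mxtraceZ mxtrace_tens_mul_max_ent mulrCA.
Qed.

Lemma unitary1 p : unitary (1%:M : 'M[C]_p).
Proof. by rewrite /unitary adjmx1 mul1mx. Qed.

Lemma col_proj_state p (U : 'M[C]_p) k : unitary U -> is_state (col_proj U k).
Proof.
move=> hU; split; last first.
  by rewrite /col_proj mxtrace_mulC /mxtrace big_ord1 adjmx_col_mul_col hU mxE eqxx.
move=> v; set w := col k U.
have -> : adjmx v *m (w *m adjmx w) *m v = (adjmx v *m w) *m adjmx (adjmx v *m w).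
  by rewrite adjmxM adjmxK !mulmxA.
by rewrite mxE big_ord1 adjmxE mulcJ_ge0.
Qed.

End ClassicalQuantum.

Section GeometricDiscord.
Variable R : rcfType.
Local Notation C := R[i].
Local Open Scope complex_scope.
Variable m : nat.
Hypothesis m_gt0 : (0 < m)%N.
Local Notation rho := (max_ent_state R m).

Lemma mxtrace_sqr_max_ent_sub_cq (U : 'M[C]_m) pr sig : unitary U ->
  let chi := cq_state U pr sig in
  \tr ((rho - chi) *m (rho - chi)) =
  1 - 2 * (m%:R)^-1 * \sum_k (pr k)%:C * \tr (col_proj U k *m (sig k)^T)
  + \sum_k (pr k)%:C ^+ 2 * \tr (sig k *m sig k).
Proof.
move=> hU chi; rewrite mulmxBl !mulmxBr !raddfB /= [\tr (rho *m chi)]mxtrace_mulC.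
rewrite mxtrace_max_ent_sqr // mxtrace_cq_state_mul_max_ent mxtrace_cq_state_sqr //.
ring.
Qed.

Lemma DG_max_ent_lower chi : zero_discord chi ->
  ((m%:R - 1) / m%:R : R)%:C <= \tr ((rho - chi) *m (rho - chi)).
Proof.
case=> U [pr [sig [hU _ _ sig_state ->]]].
rewrite (mxtrace_sqr_max_ent_sub_cq pr sig hU).
pose M k := (pr k)%:C *: sig k - (m%:R)^-1 *: (col_proj U k)^T.
have M_herm k : Defs.hermitian (M k).
  have sig_herm : Defs.hermitian (sig k).
    by apply: psd_hermitian; case: (sig_state k).
  rewrite /Defs.hermitian /M adjmxB !adjmxZ conjc_real conjc_inv conjc_nat.
  by rewrite adjmx_trmx adjmx_col_proj sig_herm.
have trMM k : \tr (M k *m M k) = (pr k)%:C ^+ 2 * \tr (sig k *m sig k)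
    - 2 * (m%:R)^-1 * ((pr k)%:C * \tr (col_proj U k *m (sig k)^T))
    + (m%:R)^-1 * (m%:R)^-1.
  have tr_sig_P : \tr (sig k *m (col_proj U k)^T) = \tr (col_proj U k *m (sig k)^T).
    by rewrite -mxtrace_tr trmx_mul trmxK.
  have tr_PP : \tr ((col_proj U k)^T *m (col_proj U k)^T) = 1.
    by rewrite -trmx_mul mxtrace_tr mxtrace_col_proj_mul // eqxx.
  rewrite /M mulmxBl !mulmxBr -!scalemxAl -!scalemxAr !scalerA !raddfB /= !mxtraceZ.
  rewrite [\tr ((col_proj U k)^T *m sig k)]mxtrace_mulC tr_sig_P tr_PP; ring.
have m_neq0 : (m%:R : C) != 0 by rewrite pnatr_eq0 -lt0n.
rewrite -subr_ge0 (_ : _ - _ = \sum_k \tr (M k *m M k)).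
  by apply: sumr_ge0 => k _; exact: mxtrace_sqr_hermitian_ge0.
rewrite (eq_bigr _ (fun k _ => trMM k)) big_split /= sumrB -mulr_sumr.
rewrite sumr_const card_ord.
rewrite rmorphM rmorphB fmorphV /= rmorph_nat rmorph1 -mulr_natr.
by field.
Qed.

Lemma DG_max_ent_witness : exists chi : 'M[C]_(m * m),
  zero_discord chi /\ \tr ((rho - chi) *m (rho - chi)) = ((m%:R - 1) / m%:R : R)%:C.
Proof.
have m_neq0 : (m%:R : R) != 0 by rewrite pnatr_eq0 -lt0n.
have U1 := @unitary1 R m.
pose pr (k : 'I_m) := (m%:R : R)^-1.
pose sig k := col_proj (1%:M : 'M[C]_m) k.
have sigT k : (sig k)^T = sig k by rewrite /sig col_proj1 trmx_delta.
exists (cq_state 1%:M pr sig); split.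
  exists 1%:M, pr, sig; split.
  - exact: U1.
  - by move=> k; rewrite invr_ge0 ler0n.
  - by rewrite /pr sumr_const card_ord -[_ *+ m]mulr_natl mulfV.
  - by move=> k; apply: col_proj_state.
  - by [].
rewrite (mxtrace_sqr_max_ent_sub_cq _ _ U1).
under eq_bigr => k _ do rewrite sigT (mxtrace_col_proj_mul _ _ U1) eqxx mulr1.
under [X in _ + X]eq_bigr => k _ do
  rewrite (mxtrace_col_proj_mul _ _ U1) eqxx mulr1.
rewrite /pr !sumr_const card_ord.
rewrite rmorphM rmorphB fmorphV /= rmorph_nat rmorph1.
have m_neq0C : (m%:R : C) != 0 by rewrite pnatr_eq0 -lt0n.
by field.
Qed.

Lemma DG_max_ent : DG_is rho ((m%:R - 1) / m%:R).
Proof. by split; [exact: DG_max_ent_witness | exact: DG_max_ent_lower]. Qed.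

End GeometricDiscord.

Unset Implicit Arguments.

Theorem mainTheorem5 (R : realType) (m : nat) (hm : (0 < m)%N)
    (lamA lamB : 'I_(m ^ 2 - 1) -> 'M[R[i]]_m)
    (hA : su_generators lamA) (hB : su_generators lamB) :
  DP_is lamA lamB (max_ent_state R m) ((m%:R - 1) / m%:R) /\
  DG_is (max_ent_state R m) ((m%:R - 1) / m%:R).
Proof. by split; [exact: DP_max_ent | exact: DG_max_ent]. Qed.
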